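(* Let $(x_n)_{n \geq 1}$ be a sequence of vectors with $x_n$ on the complex unit sphere of $\mathbb{C}^n$ for all $n$. Then there exists a unique virtual isometry $(u_n)_{n \geq 1}$ such that $u_n(e_n) = x_n$ for all $n \geq 1$, and it is given by $u_n = r_n r_{n-1}\cdots r_1$, where for $j \in \{1,\dots,n\}$, $r_j = \mathrm{Id}$ if $x_j = e_j$, and otherwise $r_j$ is the unique reflection (unitary operator $r$ with $r-\mathrm{Id}$ of rank one, acting on $\mathbb{C}^j$ and fixing $e_k$ for $k>j$) such that $r_j(e_j) = x_j$. Moreover, if $x_n = e_{i_n}$ with $i_n \in \{1,\dots,n\}$ for all $n$, then $(u_n)_{n\ge1}$ is the sequence of permutation matrices (with $u_n e_j = e_{\sigma_n(j)}$) of the virtual permutation $(\sigma_n)_{n\ge1}$ given by $\sigma_n = \tau_{n,i_n}\tau_{n-1,i_{n-1}}\cdots\tau_{1,i_1}$, where $\tau_{j,k} = \mathrm{Id}$ if $j = k$ and $\tau_{j,k}$ is the transposition $(j,k)$ if $j \neq k$.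
   Context: Let $(e_k)$ be the canonical basis of $\ell^2$; identify $\mathbb{C}^n$ with the span of $e_1,\dots,e_n$ and $U(n)$ with the unitary operators fixing every $e_k$, $k>n$. For $n\ge m\ge1$ and $u\in U(n)$, $\pi_{n,m}(u)$ is the unique $v\in U(m)$ such that the range of $u-v$ is contained in $(u-\mathrm{Id})(\mathrm{span}\{e_k:k>m\})$ (existence and uniqueness are known). A virtual isometry is a sequence $(u_n)_{n\ge1}$ with $u_n\in U(n)$ and $\pi_{n+1,n}(u_{n+1})=u_n$ for all $n\ge1$. A virtual permutation is a sequence $(\sigma_n)$, $\sigma_n\in\mathcal{S}_n$, such that for $n\ge m$, $\sigma_m$ is obtained from $\sigma_n$ by deleting $m+1,\dots,n$ from its cycle structure. *)

From HB Require Import structures.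
From mathcomp Require Import all_boot all_order all_algebra all_fingroup.
From mathcomp Require Import spectral.
From mathcomp Require Import reals.
From mathcomp Require Import complex.



Unset Printing Implicit Defensive.

Import Order.TTheory GRing.Theory Num.Theory.
Local Open Scope ring_scope.

(* Conventions.
   - The scalars are C := R[i] = complex R for R : realType (i.e. the complex
     numbers).
   - An operator on l^2 fixing every e_k, k > n, is represented by its n x n
     matrix on C^n = span(e_1,...,e_n) (column-vector convention: the operator
     acts by x |-> A *m x).  Matrix indices are 0-based: the ordinal i : 'I_n
     stands for the basis vector e_(i+1).
   - U(n) = n x n unitary matrices ([unitarymx] from mathcomp's spectral.v). *)

Section Defs.
Context {R : realType}.
Local Notation C := (R[i]).

(* the (1-based) canonical basis vector e_k of C^n *)
Definition evec (n k : nat) : 'cV[C]_n := \col_(i < n) ((i.+1 == k)%:R).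

Definition unit_sphere (n : nat) (x : 'cV[C]_n) : Prop :=
  \sum_(i < n) `|x i 0| ^+ 2 = 1.

(* entry (i,j) (0-based, natural numbers) of the infinite matrix of the
   operator on l^2 given by A : 'M_m (identity outside C^m) *)
Definition mxnat (m : nat) (A : 'M[C]_m) (i j : nat) : C :=
  match @insub _ (fun k => k < m)%N 'I_m i, @insub _ (fun k => k < m)%N 'I_m j with
  | Some i', Some j' => A i' j'
  | _, _ => (i == j)%:R
  end.

Definition embed (n m : nat) (A : 'M[C]_m) : 'M[C]_n :=
  \matrix_(i < n, j < n) mxnat m A i j.

(* is_pi n m u v :  v = pi_{n,m}(u), i.e. v in U(m) and the range of u - v is
   contained in (u - Id)(span{e_k : k > m}).  All operators fix e_k for k > n,
   so everything takes place in C^n; the vectors of span{e_k : k > m} inside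
   C^n are those whose 0-based coordinates i < m vanish. *)
Definition is_pi (n m : nat) (u : 'M[C]_n) (v : 'M[C]_m) : Prop :=
  v \is unitarymx /\
  forall y : 'cV[C]_n, exists z : 'cV[C]_n,
    (forall i : 'I_n, (i < m)%N -> z i 0 = 0) /\
    (u - embed n m v) *m y = (u - 1%:M) *m z.

Definition virtual_isometry (u : forall n : nat, 'M[C]_n) : Prop :=
  (forall n, (1 <= n)%N -> u n \is unitarymx) /\
  (forall n, (1 <= n)%N -> is_pi n.+1 n (u n.+1) (u n)).

Definition reflection (j : nat) (r : 'M[C]_j) : Prop :=
  r \is unitarymx /\ \rank (r - 1%:M) = 1%N.

Definition refl_spec (x : forall n : nat, 'cV[C]_n) (j : nat) (r : 'M[C]_j)
  : Prop :=
  (x j = evec j j -> r = 1%:M) /\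
  (x j <> evec j j -> reflection j r /\ r *m evec j j = x j).

Definition refl_prod (r : forall j : nat, 'M[C]_j) (n : nat) : 'M[C]_n :=
  \prod_(j <- rev (iota 1 n)) embed n j (r j).

Definition pmx (n : nat) (s : 'S_n) : 'M[C]_n :=
  \matrix_(a < n, b < n) ((a == s b)%:R).

End Defs.

Definition permnat (n : nat) (s : 'S_n) (j : nat) : nat :=
  match @insub _ (fun k => k < n)%N 'I_n j with
  | Some j' => val (s j')
  | None => j
  end.

(* s' in S_m is obtained from s in S_n (m <= n) by deleting m+1,...,n from
   its cycle structure: s'(j) is the first iterate s^t(j), t >= 1, lying in
   {1..m}. *)
Definition delete_cycles (n m : nat) (s : 'S_n) (s' : 'S_m) : Prop :=
  forall j : 'I_m, exists t : nat,
    (1 <= t)%N /\ iter t (permnat n s) j = val (s' j) /\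
    (forall t', (1 <= t')%N -> (t' < t)%N -> (m <= iter t' (permnat n s) j)%N).

Definition virtual_permutation (sigma : forall n : nat, 'S_n) : Prop :=
  forall n m, (1 <= m)%N -> (m <= n)%N -> delete_cycles n m (sigma n) (sigma m).

Definition tau (n j k : nat) : 'S_n :=
  match @insub _ (fun l => l < n)%N 'I_n j.-1,
        @insub _ (fun l => l < n)%N 'I_n k.-1 with
  | Some a, Some b => tperm a b
  | _, _ => 1%g
  end.

(* sigma_n = tau_{n,i_n} o ... o tau_{1,i_1} (as maps: tau_{1,i_1} applied
   first).  Note that in mathcomp (s * t)%g x = t (s x) (lemma permM), hence
   the product is written in the order tau_1 * ... * tau_n. *)
Definition sigma_of (i : nat -> nat) (n : nat) : 'S_n :=
  (\prod_(j <- iota 1 n) tau n j (i j))%g.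

From HB Require Import structures.
From mathcomp Require Import all_boot all_order all_algebra all_fingroup.
From mathcomp Require Import spectral reals complex ring.
Import Order.TTheory GRing.Theory Num.Theory.
Local Open Scope ring_scope.

(* For unit vectors x <> e, at most one unitary operator of the form I + (x - e) g
   sends e to x: taking adjoints in (I + (x - e) g) e = x gives
   g^* ((x - e)^* x) = e - x, where (x - e)^* x is then a nonzero scalar.
   Both r = I - (1 - <x, e>)^-1 (x - e) (x - e)^* and any reflection sending e to x
   (its rank-one part has x - e in its range) are of this form, so r is the unique
   such reflection.  Next, u in U(n+1) projects to v in U(n) exactly when
   u = diag(v, 1) + (u - I) e_(n+1) g for some row g.  Hence
   u_(n+1) = r_(n+1) diag(u_n, 1) projects to u_n; conversely, if w_(n+1) projects
   to u_n and sends e_(n+1) to x_(n+1), then w_(n+1) diag(u_n, 1)^* is a unitary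
   I + (x_(n+1) - e_(n+1)) g' sending e_(n+1) to x_(n+1), so it is r_(n+1), and
   uniqueness follows by induction.  When x_j = e_k, r_j is the permutation matrix
   of tau_(j,k), and sigma_(n+1) is sigma_n with n+1 inserted into its cycles,
   which gives the deletion property by induction on n. *)

Section Adjoint.
Local Open Scope sesquilinear_scope.
Context {C : numClosedFieldType}.

Lemma adjmxM m n p (A : 'M[C]_(m, n)) (B : 'M[C]_(n, p)) :
  (A *m B)^t* = B^t* *m A^t*.
Proof. by rewrite trmx_mul map_mxM. Qed.

Lemma adjmxD m n (A B : 'M[C]_(m, n)) : (A + B)^t* = A^t* + B^t*.
Proof. by rewrite linearD map_mxD. Qed.

Lemma adjmxB m n (A B : 'M[C]_(m, n)) : (A - B)^t* = A^t* - B^t*.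
Proof. by rewrite linearB map_mxB. Qed.

Lemma adjmxZ m n a (A : 'M[C]_(m, n)) : (a *: A)^t* = a^* *: A^t*.
Proof. by rewrite linearZ map_mxZ. Qed.

Lemma adjmx_scalar n a : (a%:M : 'M[C]_n)^t* = a^*%:M.
Proof. by rewrite tr_scalar_mx map_scalar_mx. Qed.

Lemma adjmx1 n : (1%:M : 'M[C]_n)^t* = 1%:M.
Proof. by rewrite adjmx_scalar conjC1. Qed.

Lemma unitarymx1 n : (1%:M : 'M[C]_n) \is unitarymx.
Proof. by apply/unitarymxP; rewrite adjmx1 mulmx1. Qed.

Lemma cvec_adj_eq0 n (v : 'cV[C]_n) : v^t* *m v = 0 -> v = 0.
Proof.
move=> h0; have /= := dnorm_eq0 (@dotmx C n) (v^t*).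
rewrite dotmxE trmxCK h0 mxE eqxx => /esym/eqP v0.
by rewrite -[v]trmxCK v0 trmx0 map_mx0.
Qed.

End Adjoint.

Lemma sum_ord_delta {T : pzSemiRingType} N (F : nat -> T) (c : nat) :
  \sum_(k < N) F k * (k == c :> nat)%:R = if (c < N)%N then F c else 0.
Proof.
elim: N => [|N IH]; first by rewrite big_ord0.
rewrite big_ord_recr /= IH.
case: (ltngtP c N) => h.
- by rewrite mulr0n mulr0 addr0 ltnS (ltnW h).
- by rewrite mulr0n mulr0 addr0 ltnS leqNgt h.
- by rewrite mulr1n mulr1 add0r h ltnSn.
Qed.

Lemma sum_ord_deltaC {T : pzSemiRingType} N (F : nat -> T) (c : nat) :
  \sum_(k < N) (c == k :> nat)%:R * F k = if (c < N)%N then F c else 0.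
Proof.
rewrite -sum_ord_delta; apply: eq_bigr => k _.
by rewrite eq_sym mulr_natl mulr_natr.
Qed.

Lemma eqS_pred m n : (0 < n)%N -> (m.+1 == n) = (m == n.-1).
Proof. by move=> n0; rewrite -[in LHS](prednK n0) eqSS. Qed.

Lemma iota1S n : iota 1 n.+1 = rcons (iota 1 n) n.+1.
Proof. by rewrite -[in LHS](addn1 n) iotaD cats1 add1n. Qed.

Section Embedding.
Local Open Scope sesquilinear_scope.
Context {R : realType}.
Local Notation C := (R[i]).

Lemma mxnatE {m} (A : 'M[C]_m) (i j : 'I_m) : mxnat m A i j = A i j.
Proof.
rewrite /mxnat (insubT (fun k => k < m)%N (ltn_ord i)).
by rewrite (insubT (fun k => k < m)%N (ltn_ord j)); congr (A _ _); apply: val_inj.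
Qed.

Lemma mxnat_out {m} (A : 'M[C]_m) (i j : nat) : ~~ ((i < m) && (j < m))%N ->
  mxnat m A i j = (i == j)%:R.
Proof.
rewrite /mxnat negb_and; case/orP => /negbTE h; first by rewrite insubF.
by rewrite [insub j]insubF //; case: insub.
Qed.

Lemma mxnat_lt {m} (A : 'M[C]_m) (i j : nat) (hi : (i < m)%N) (hj : (j < m)%N) :
  mxnat m A i j = A (Ordinal hi) (Ordinal hj).
Proof. by rewrite -(mxnatE A (Ordinal hi)). Qed.

Lemma mxnat1 m (i j : nat) : mxnat m (1%:M : 'M[C]_m) i j = (i == j)%:R.
Proof.
have [/andP[hi hj] | h] := boolP ((i < m) && (j < m))%N; last by rewrite mxnat_out.
by rewrite mxnat_lt mxE.
Qed.

Lemma mxnatM N m (A B : 'M[C]_m) (i j : nat) :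
  (m <= N)%N -> (i < N)%N -> (j < N)%N ->
  mxnat m (A *m B) i j = \sum_(k < N) mxnat m A i k * mxnat m B k j.
Proof.
move=> mN iN jN.
have [im | im] := boolP (i < m)%N; last first.
  under eq_bigr do rewrite mxnat_out ?(negbTE im) //.
  by rewrite (sum_ord_deltaC _ (fun k => mxnat m B k j)) iN !mxnat_out ?(negbTE im).
have [jm | jm] := boolP (j < m)%N; last first.
  under eq_bigr do rewrite [mxnat m B _ _]mxnat_out ?(negbTE jm) ?andbF //.
  by rewrite (sum_ord_delta _ (mxnat m A i)) jN !mxnat_out ?(negbTE jm) ?andbF.
rewrite mxnat_lt mxE (bigID (fun k : 'I_N => (k < m)%N)) /=.
rewrite [X in _ = _ + X]big1 ?addr0 => [|k km]; last first.
  rewrite mxnat_out ?(negbTE km) ?andbF //.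
  by rewrite (_ : (i == k) = false) ?mul0r //; apply: contraNF km => /eqP <-.
rewrite -(big_ord_widen _ (fun k => mxnat m A i k * mxnat m B k j) mN).
by apply: eq_bigr => k _; rewrite -(mxnatE A) -(mxnatE B).
Qed.

Lemma embedM N m (A B : 'M[C]_m) : (m <= N)%N ->
  embed N m (A *m B) = embed N m A *m embed N m B.
Proof.
move=> mN; apply/matrixP => i j; rewrite !mxE (mxnatM N) //.
by apply: eq_bigr => k _; rewrite !mxE.
Qed.

Lemma embed1 N m : embed N m (1%:M : 'M[C]_m) = 1%:M.
Proof. by apply/matrixP => i j; rewrite !mxE mxnat1. Qed.

Lemma embed_id N (A : 'M[C]_N) : embed N N A = A.
Proof. by apply/matrixP => i j; rewrite mxE mxnatE. Qed.

Lemma embed_embed N m j (A : 'M[C]_j) : (j <= m)%N ->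
  embed N m (embed m j A) = embed N j A.
Proof.
move=> jm; apply/matrixP => a b; rewrite !mxE.
have [/andP[am bm] | h] := boolP ((a < m) && (b < m))%N.
  by rewrite mxnat_lt mxE.
rewrite !mxnat_out //; apply: contra h => /andP[aj bj].
by rewrite (leq_trans aj jm) (leq_trans bj jm).
Qed.

Lemma embed_adj N m (A : 'M[C]_m) : embed N m (A^t*) = (embed N m A)^t*.
Proof.
apply/matrixP => i j; rewrite !mxE.
have [/andP[im jm] | h] := boolP ((i < m) && (j < m))%N.
  by rewrite !mxnat_lt !mxE.
rewrite mxnat_out // mxnat_out 1?andbC // eq_sym.
exact/esym/conjC_nat.
Qed.

Lemma embed_unitary N m (A : 'M[C]_m) : (m <= N)%N -> A \is unitarymx ->
  embed N m A \is unitarymx.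
Proof.
move=> mN /unitarymxP AU; apply/unitarymxP.
by rewrite -embed_adj -embedM // AU embed1.
Qed.

Lemma embed_evec n (A : 'M[C]_n) : embed n.+1 n A *m evec n.+1 n.+1 = evec n.+1 n.+1.
Proof.
apply/matrixP => i j; rewrite !mxE.
under eq_bigr do rewrite !mxE eqSS.
by rewrite (sum_ord_delta _ (mxnat n A i)) ltnSn eqSS mxnat_out // ltnn andbF.
Qed.

End Embedding.

Section Reflection.
Local Open Scope sesquilinear_scope.
Context {C : numClosedFieldType} {n : nat}.
Implicit Types (e x : 'cV[C]_n) (g : 'rV[C]_n).

Lemma unitary_update_unique e x g1 g2 :
  (1%:M + (x - e) *m g1) \is unitarymx -> (1%:M + (x - e) *m g1) *m e = x ->
  (1%:M + (x - e) *m g2) \is unitarymx -> (1%:M + (x - e) *m g2) *m e = x ->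
  (x - e) *m g1 = (x - e) *m g2.
Proof.
set d := x - e.
have adj_eq g : (1%:M + d *m g) \is unitarymx -> (1%:M + d *m g) *m e = x ->
    g^t* *m (d^t* *m x) = - d.
  move=> /unitarymxP/mulmx1C MU Me.
  have : (1%:M + d *m g)^t* *m x = e by rewrite -Me mulmxA MU mul1mx.
  rewrite adjmxD adjmx1 adjmxM mulmxDl mul1mx -mulmxA => h.
  by apply: (addrI x); rewrite h /d opprB addrC subrK.
move=> U1 E1 U2 E2; have [-> | d0] := eqVneq d 0; first by rewrite !mul0mx.
have := adj_eq g1 U1 E1; have := adj_eq g2 U2 E2.
rewrite [d^t* *m x]mx11_scalar !mul_mx_scalar; set s := (d^t* *m x) 0 0.
have [-> | s0] := eqVneq s 0.
  by rewrite !scale0r => /eqP; rewrite eq_sym oppr_eq0 (negbTE d0).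
move=> <- /(scalerI s0)/(congr1 (fun A => A^t*)).
by rewrite !trmxCK => ->.
Qed.

Variable e : 'cV[C]_n.
Hypothesis e_unit : e^t* *m e = 1%:M.

Definition refl x : 'M[C]_n :=
  1%:M - (1 - ((e^t* *m x) 0 0)^*)^-1 *: ((x - e) *m (x - e)^t*).

Lemma refl_update x :
  refl x = 1%:M + (x - e) *m (- (1 - ((e^t* *m x) 0 0)^*)^-1 *: (x - e)^t*).
Proof. by rewrite /refl -scalemxAr scaleNr. Qed.

Lemma refl_e : refl e = 1%:M.
Proof. by rewrite /refl subrr mul0mx scaler0 subr0. Qed.

Section UnitVector.
Variable x : 'cV[C]_n.
Hypothesis x_unit : x^t* *m x = 1%:M.
Let a := (e^t* *m x) 0 0.

Lemma adj_x_mul_e : x^t* *m e = a^*%:M.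
Proof. by rewrite -adjmx_scalar -mx11_scalar adjmxM trmxCK. Qed.

Lemma adj_sub_mul_e : (x - e)^t* *m e = (a^* - 1)%:M.
Proof. by rewrite adjmxB mulmxBl adj_x_mul_e e_unit raddfB. Qed.

Lemma adj_sub_mul_sub : (x - e)^t* *m (x - e) = (2 - a - a^*)%:M.
Proof.
rewrite adjmxB mulmxBl !mulmxBr x_unit adj_x_mul_e [e^t* *m x]mx11_scalar -/a e_unit.
by apply/matrixP => i j; rewrite !mxE; case: (i == j) => /=; ring.
Qed.

Lemma eq_of_inner_eq1 : a = 1 -> x = e.
Proof.
move=> a1; apply/eqP; rewrite -subr_eq0; apply/eqP/cvec_adj_eq0.
by rewrite adj_sub_mul_sub a1 conjC1 (_ : 2 - 1 - 1 = 0 :> C) ?raddf0 //; ring.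
Qed.

Lemma refl_denom_neq0 : x != e -> 1 - a^* != 0.
Proof.
move=> xe; rewrite subr_eq0; apply: contra xe => /eqP a1.
by apply/eqP/eq_of_inner_eq1; rewrite -[a]conjCK -a1 conjC1.
Qed.

Lemma refl_mulmx_e : refl x *m e = x.
Proof.
have [-> | xe] := eqVneq x e; first by rewrite refl_e mul1mx.
have a1 := refl_denom_neq0 xe.
rewrite /refl -/a mulmxBl mul1mx -scalemxAl -mulmxA adj_sub_mul_e mul_mx_scalar scalerA.
rewrite (_ : _ * _ = -1); first by rewrite scaleN1r opprK addrC subrK.
by move: (a^*) a1 => b b1; field.
Qed.

Lemma refl_unitary : refl x \is unitarymx.
Proof.
have [-> | xe] := eqVneq x e; first by rewrite refl_e unitarymx1.
have a1 := refl_denom_neq0 xe.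
have a1' : 1 - a != 0 by rewrite -(conjC_eq0 (1 - a)) rmorphB rmorph1.
apply/unitarymxP; rewrite /refl -/a.
set k := (1 - a^*)^-1; set P := (x - e) *m (x - e)^t*.
have P_adj : P^t* = P by rewrite /P adjmxM trmxCK.
have PP : P *m P = (2 - a - a^*) *: P.
  by rewrite /P -mulmxA [(x - e)^t* *m _]mulmxA adj_sub_mul_sub mul_scalar_mx scalemxAr.
have kC : k^* = (1 - a)^-1 by rewrite /k fmorphV rmorphB rmorph1 /= conjCK.
rewrite adjmxB adjmx1 adjmxZ P_adj mulmxBl mul1mx !mulmxBr mulmx1.
rewrite -!scalemxAl -!scalemxAr PP !scalerA.
have -> : k * k^* * (2 - a - a^*) = k^* + k.
  by rewrite kC /k; move: (a^*) a a1 a1' => b c b1 c1; field; rewrite b1 c1.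
by apply/matrixP => i j; rewrite !mxE; ring.
Qed.

Lemma refl_rank : x != e -> \rank (refl x - 1%:M) = 1%N.
Proof.
move=> xe; have a1 := refl_denom_neq0 xe.
rewrite /refl addrC addKr mxrank_opp mxrank_scale_nz ?invr_eq0 //.
apply/eqP; rewrite eqn_leq (leq_trans (mxrankM_maxr _ _)) ?rank_leq_row //.
rewrite lt0n mxrank_eq0; apply/eqP => P0.
have /eqP : (x - e) *m ((x - e)^t* *m e) = 0 by rewrite mulmxA P0 mul0mx.
rewrite adj_sub_mul_e mul_mx_scalar scalemx_eq0 subr_eq0 => /orP[/eqP a1C|].
  by move: a1; rewrite -a1C subrr eqxx.
by rewrite subr_eq0 (negbTE xe).
Qed.

Lemma unitary_update_refl g : (1%:M + (x - e) *m g) \is unitarymx ->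
  (1%:M + (x - e) *m g) *m e = x -> 1%:M + (x - e) *m g = refl x.
Proof.
move=> MU Me; rewrite refl_update; congr (_ + _); apply: unitary_update_unique MU Me _ _.
  by rewrite -refl_update refl_unitary.
by rewrite -refl_update refl_mulmx_e.
Qed.

Lemma refl_unique r : r \is unitarymx -> \rank (r - 1%:M) = 1%N -> r *m e = x ->
  x != e -> r = refl x.
Proof.
move=> rU rk re xe.
have d_col : (r - 1%:M) *m e = x - e by rewrite mulmxBl mul1mx re.
(* [r - 1] has rank one and [x - e] lies in its column space, so [r - 1 = (x - e) D^T]. *)
have sub_dr : ((x - e)^T <= (r - 1%:M)^T)%MS by rewrite -d_col trmx_mul submxMl.
have rk_d : \rank (x - e)^T = 1%N.
  apply/eqP; rewrite eqn_leq rank_leq_row lt0n mxrank_eq0 -trmx0.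
  by rewrite (inj_eq trmx_inj) subr_eq0.
have : ((r - 1%:M)^T <= (x - e)^T)%MS.
  by rewrite -(mxrank_leqif_sup sub_dr).2 rk_d mxrank_tr rk.
case/submxP => D rD.
have r_update : r = 1%:M + (x - e) *m D^T.
  by rewrite -[x - e]trmxK -trmx_mul -rD trmxK addrC subrK.
by rewrite r_update in rU re *; apply: unitary_update_refl.
Qed.

End UnitVector.
End Reflection.

Section VirtualIsometry.
Local Open Scope sesquilinear_scope.
Context {R : realType}.
Local Notation C := (R[i]).

Lemma unit_sphere_adj {n} {x : 'cV[C]_n} : unit_sphere n x -> x^t* *m x = 1%:M.
Proof.
move=> x1; apply/matrixP => i j; rewrite !ord1 !mxE -x1.
by apply: eq_bigr => k _; rewrite !mxE normCK mulrC.
Qed.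

Lemma evec_adj_evec {n} : (0 < n)%N -> (evec n n)^t* *m evec n n = 1%:M :> 'M[C]_1.
Proof.
move=> n0; apply/matrixP => i j; rewrite !ord1 !mxE.
rewrite (eq_bigr (fun k : 'I_n => 1 * (k == n.-1 :> nat)%:R)) => [|k _].
  by rewrite (sum_ord_delta _ (fun=> 1)) prednK ?leqnn.
by rewrite !mxE rmorph_nat -natrM mulnb andbb mul1r eqS_pred.
Qed.

Lemma cvec_last n (z : 'cV[C]_n.+1) : (forall i : 'I_n.+1, (i < n)%N -> z i 0 = 0) ->
  z = z ord_max 0 *: evec n.+1 n.+1.
Proof.
move=> z0; apply/matrixP => i j; rewrite !ord1 !mxE eqSS.
have [lt_in | ge_in] := ltnP i n; first by rewrite z0 // ltn_eqF // mulr0.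
have -> : i = ord_max by apply/val_inj/eqP; rewrite eqn_leq ge_in -ltnS ltn_ord.
by rewrite eqxx mulr1.
Qed.

Lemma is_pi_of_update {n} {u : 'M[C]_n.+1} {v : 'M[C]_n} (g : 'rV[C]_n.+1) :
  v \is unitarymx ->
  u = embed n.+1 n v + (u - 1%:M) *m evec n.+1 n.+1 *m g -> is_pi n.+1 n u v.
Proof.
move=> vU uE; split=> // y; exists (evec n.+1 n.+1 *m (g *m y)); split.
  move=> i lt_in; rewrite mxE big1 // => k _.
  by rewrite !mxE eqSS ltn_eqF // mul0r.
by rewrite {1}uE addrC addKr !mulmxA.
Qed.

Lemma update_of_is_pi {n} {u : 'M[C]_n.+1} {v : 'M[C]_n} : is_pi n.+1 n u v ->
  exists g : 'rV[C]_n.+1, u = embed n.+1 n v + (u - 1%:M) *m evec n.+1 n.+1 *m g.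
Proof.
case=> _ u_pi; set E := embed _ _ v; set d := (u - 1%:M) *m _.
have col_d j : exists c : C, col j (u - E) = c *: d.
  have [z [z0 uz]] := u_pi (delta_mx j 0).
  by exists (z ord_max 0); rewrite colE uz {1}(cvec_last _ _ z0) scalemxAr.
have [c colc] := fin_all_exists col_d.
exists (\row_j c j); apply/eqP; rewrite addrC -subr_eq; apply/eqP/matrixP => i j.
have /matrixP/(_ i 0) := colc j.
by rewrite !mxE big_ord1 !mxE mulrC => ->.
Qed.

Lemma refl_prod0 (r : forall j, 'M[C]_j) : refl_prod r 0 = 1%:M.
Proof. by rewrite /refl_prod big_nil. Qed.

Lemma refl_prodS (r : forall j, 'M[C]_j) n :
  refl_prod r n.+1 = r n.+1 *m embed n.+1 n (refl_prod r n).
Proof.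
rewrite /refl_prod iota1S rev_rcons big_cons embed_id mulmxE.
congr (_ * _); rewrite (big_morph (embed n.+1 n) (op1 := *%R) (id1 := 1%:M)).
- apply: eq_big_seq => j; rewrite mem_rev mem_iota => /andP[_ lt_jn].
  by rewrite embed_embed // -ltnS -(add1n n).
- by move=> A B; rewrite -!mulmxE embedM.
- exact: embed1.
Qed.

Variable x : forall n : nat, 'cV[C]_n.
Hypothesis x_sphere : forall n : nat, (1 <= n)%N -> unit_sphere n (x n).

Definition reflx j : 'M[C]_j := refl (evec j j) (x j).

Definition ux n : 'M[C]_n := refl_prod reflx n.

Lemma reflx_unitary j : (0 < j)%N -> reflx j \is unitarymx.
Proof.
by move=> j0; apply: refl_unitary; [exact: evec_adj_evec | exact/unit_sphere_adj/x_sphere].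
Qed.

Lemma reflx_evec j : (0 < j)%N -> reflx j *m evec j j = x j.
Proof.
by move=> j0; apply: refl_mulmx_e; [exact: evec_adj_evec | exact/unit_sphere_adj/x_sphere].
Qed.

Lemma refl_specP j r : (0 < j)%N -> refl_spec x j r <-> r = reflx j.
Proof.
move=> j0; have e1 := evec_adj_evec j0; have x1 := unit_sphere_adj (x_sphere _ j0).
split=> [[fixed moved] | ->].
  have [xe | xe] := eqVneq (x j) (evec j j); first by rewrite /reflx xe refl_e fixed.
  by have [[rU rk] re] := moved (elimN eqP xe); apply: refl_unique.
split=> [xe | /eqP xe]; first by rewrite /reflx xe refl_e.
by split; first split; [exact: reflx_unitary | exact: refl_rank | exact: reflx_evec].
Qed.

Lemma ux_unitary n : ux n \is unitarymx.
Proof.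
elim: n => [|n IHn]; first by rewrite /ux refl_prod0 unitarymx1.
by rewrite /ux refl_prodS mul_unitarymx ?reflx_unitary ?embed_unitary.
Qed.

Lemma ux_evec n : (0 < n)%N -> ux n *m evec n n = x n.
Proof. by case: n => // n _; rewrite /ux refl_prodS -mulmxA embed_evec reflx_evec. Qed.

Lemma ux_pi n : is_pi n.+1 n (ux n.+1) (ux n).
Proof.
apply: (is_pi_of_update _ (ux_unitary n)); set E := embed _ _ _.
have := refl_update (evec n.+1 n.+1) (x n.+1); rewrite -/(reflx _) => r_upd.
rewrite mulmxBl mul1mx ux_evec //.
by rewrite {1}/ux refl_prodS -/(ux n) -/E r_upd mulmxDl mul1mx -mulmxA.
Qed.

Lemma ux_unique (w : forall n : nat, 'M[C]_n) : virtual_isometry w ->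
  (forall n : nat, (0 < n)%N -> w n *m evec n n = x n) ->
  forall n : nat, (0 < n)%N -> w n = ux n.
Proof.
move=> [wU w_pi] w_e; elim=> // -[_ _ | n IHn _].
  have evec11 : evec 1 1 = 1%:M :> 'M[C]_1 by apply/matrixP => i j; rewrite !ord1 !mxE.
  by rewrite -[w 1]mulmx1 -[ux 1]mulmx1 -evec11 w_e ?ux_evec.
set e := (evec n.+2 n.+2 : 'cV[C]_n.+2); set E := embed n.+2 n.+1 (ux n.+1).
have [g wE] := update_of_is_pi (w_pi n.+1 isT); rewrite IHn // -/E in wE.
rewrite mulmxBl mul1mx w_e // in wE.
have EU : E \is unitarymx by rewrite embed_unitary ?ux_unitary.
have wEadj : w n.+2 *m E^t* = 1%:M + (x n.+2 - e) *m (g *m E^t*).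
  by rewrite {1}wE mulmxDl (unitarymxP EU) mulmxA.
have Eadj_e : E^t* *m e = e by rewrite -embed_adj embed_evec.
have : w n.+2 *m E^t* = reflx n.+2.
  rewrite wEadj; apply: unitary_update_refl.
  - exact: evec_adj_evec.
  - exact/unit_sphere_adj/x_sphere.
  - by rewrite -wEadj mul_unitarymx ?trmxC_unitary ?wU.
  - by rewrite -wEadj -mulmxA Eadj_e w_e.
by rewrite /ux refl_prodS -/(ux n.+1) -/E => <-; rewrite mulmxKtV.
Qed.

End VirtualIsometry.

Lemma tperm_val n (u v w : 'I_n) :
  val (tperm u v w) = if val w == val u then val v else if val w == val v then val u else val w.
Proof.
rewrite permE /= -!(inj_eq val_inj) /=.
by case: (val w == val u); case: (val w == val v).
Qed.

Lemma tau_val n j k (w : 'I_n) : (0 < j <= n)%N -> (0 < k <= n)%N ->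
  val (tau n j k w) = if val w == j.-1 then k.-1 else if val w == k.-1 then j.-1 else val w.
Proof.
move=> /andP[j0 jn] /andP[k0 kn].
have lt_jn : (j.-1 < n)%N by rewrite prednK.
have lt_kn : (k.-1 < n)%N by rewrite prednK.
by rewrite /tau (insubT (fun l => l < n)%N lt_jn) (insubT (fun l => l < n)%N lt_kn) tperm_val.
Qed.

Section PermutationMatrix.
Local Open Scope sesquilinear_scope.
Context {R : realType}.
Local Notation C := (R[i]).

Lemma pmxE n (s : 'S_n) (a b : 'I_n) : pmx n s a b = (val a == val (s b))%:R :> C.
Proof. by rewrite mxE. Qed.

Lemma pmx1 n : pmx n 1%g = 1%:M :> 'M[C]_n.
Proof. by apply/matrixP => a b; rewrite !mxE perm1. Qed.

Lemma pmx_mul n (s t : 'S_n) : pmx n s *m pmx n t = pmx n (t * s)%g :> 'M[C]_n.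
Proof.
apply/matrixP => a b; rewrite !mxE (bigD1 (t b)) //= big1 => [|c tb_c].
  by rewrite !mxE eqxx mulr1 addr0 permM.
by rewrite !mxE (negbTE tb_c) mulr0.
Qed.

Lemma pmx_prod n (f : nat -> 'S_n) (l : seq nat) :
  pmx n (\prod_(j <- l) f j)%g = \prod_(j <- rev l) pmx n (f j) :> 'M[C]_n.
Proof.
elim: l => [|a l IHl]; first by rewrite !big_nil pmx1.
by rewrite big_cons rev_cons big_rcons /= -IHl -mulmxE pmx_mul.
Qed.

(* Entrywise form of [1 - (e_K - e_J) (e_K - e_J)^* = pmx (tperm J K)]. *)
Lemma tperm_mx_entry (A B J K : nat) :
  (A == B)%:R - ((A == K)%:R - (A == J)%:R) * ((B == K)%:R - (B == J)%:R) =
  (A == (if B == J then K else if B == K then J else B))%:R :> C.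
Proof.
have [-> | neq_BJ] := eqVneq B J.
  have [<- | neq_JK] := eqVneq J K; first by rewrite !subrr mulr0 subr0.
  by rewrite /= ?eqxx; ring.
have [-> | neq_BK] := eqVneq B K; last by rewrite subrr mulr0 subr0.
by rewrite /= ?eqxx; ring.
Qed.

Lemma refl_evec_tau j k : (0 < k <= j)%N ->
  refl (evec j j) (evec j k) = pmx j (tau j j k) :> 'M[C]_j.
Proof.
move=> /andP[k0 kj]; have j0 : (0 < j)%N := leq_trans k0 kj.
have -> : refl (evec j j) (evec j k) =
    1%:M - (evec j k - evec j j) *m (evec j k - evec j j)^t* :> 'M[C]_j.
  have [-> | neq_kj] := eqVneq k j; first by rewrite refl_e subrr mul0mx subr0.
  have inner0 : ((evec j j)^t* *m evec j k) 0 0 = 0 :> C.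
    rewrite mxE big1 // => i _; rewrite !mxE rmorph_nat -natrM mulnb.
    by case: (i.+1 =P j) => // ij; rewrite ij eq_sym (negbTE neq_kj).
  by rewrite /refl inner0 rmorph0 subr0 invr1 scale1r.
apply/matrixP => a b; rewrite pmxE !mxE big_ord1 !mxE !rmorphB !rmorph_nat !eqS_pred //.
by rewrite tau_val ?k0 ?j0 ?leqnn // tperm_mx_entry.
Qed.

Lemma embed_pmx_tau n j k : (0 < k <= j)%N -> (j <= n)%N ->
  embed n j (pmx j (tau j j k)) = pmx n (tau n j k) :> 'M[C]_n.
Proof.
move=> /andP[k0 kj] jn; have j0 : (0 < j)%N := leq_trans k0 kj.
apply/matrixP => a b; rewrite pmxE mxE tau_val ?k0 ?j0 ?(leq_trans kj jn) //.
have [/andP[aj bj] | out] := boolP ((a < j) && (b < j))%N.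
  by rewrite mxnat_lt pmxE tau_val ?k0 ?j0 ?leqnn.
rewrite mxnat_out //.
have lt_j1 : (j.-1 < j)%N by rewrite prednK.
have lt_k1 : (k.-1 < j)%N by rewrite prednK // (leq_trans k0 kj).
have [bj | bj] := boolP (b < j)%N.
  have aj : ~~ (a < j)%N by rewrite bj andbT in out.
  have a_neq v : (v < j)%N -> (val a == v) = false.
    by move=> vj; apply: contraNF aj => /eqP ->.
  rewrite (a_neq b) // a_neq //.
  by case: ifP => // _; case: ifP.
have b_neq v : (v < j)%N -> (val b == v) = false.
  by move=> vj; apply: contraNF bj => /eqP ->.
by rewrite !b_neq.
Qed.

End PermutationMatrix.

Section VirtualPermutation.
Local Open Scope nat_scope.

Lemma permnatE n (s : 'S_n) (y : 'I_n) : permnat n s y = s y.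
Proof.
rewrite /permnat (insubT (fun k => k < n) (ltn_ord y)).
by congr (val (s _)); apply: val_inj.
Qed.

Lemma permnat_out n (s : 'S_n) y : n <= y -> permnat n s y = y.
Proof. by move=> ny; rewrite /permnat insubF // ltnNge ny. Qed.

Lemma permnat_lt {n} (s : 'S_n) {y} : y < n -> permnat n s y < n.
Proof. by move=> yn; rewrite -[y]/(val (Ordinal yn)) permnatE ltn_ord. Qed.

Lemma permnatM n (s t : 'S_n) y : permnat n (s * t)%g y = permnat n t (permnat n s y).
Proof.
have [yn | ny] := ltnP y n; last by rewrite !permnat_out.
by rewrite -[y]/(val (Ordinal yn)) !permnatE permM.
Qed.

Lemma permnat1 n y : permnat n 1%g y = y.
Proof.
have [yn | ny] := ltnP y n; last by rewrite permnat_out.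
by rewrite -[y]/(val (Ordinal yn)) permnatE perm1.
Qed.

Lemma tau_permnat n j k (y : 'I_n.+1) : 0 < j <= n -> 0 < k <= n ->
  tau n.+1 j k y = permnat n (tau n j k) y :> nat.
Proof.
move=> /andP[j0 jn] /andP[k0 kn].
rewrite tau_val ?j0 ?k0 ?(leq_trans jn) ?(leq_trans kn) //.
have [yn | ny] := ltnP y n.
  by rewrite -[permnat _ _ _]/(permnat n (tau n j k) (Ordinal yn)) permnatE tau_val ?j0 ?k0.
have y_neq l : 0 < l <= n -> (val y == l.-1) = false.
  by case/andP=> l0 ln; apply: contraTF ny => /eqP ->; rewrite -ltnNge prednK.
by rewrite permnat_out // !y_neq ?j0 ?k0.
Qed.

Lemma prod_tau_permnat n (ix : nat -> nat) (l : seq nat) :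
  {in l, forall j, 0 < j <= n /\ 0 < ix j <= n} -> forall y : 'I_n.+1,
  (\prod_(j <- l) tau n.+1 j (ix j))%g y = permnat n (\prod_(j <- l) tau n j (ix j))%g y :> nat.
Proof.
elim: l => [|a l IHl] l_in y; first by rewrite !big_nil perm1 permnat1.
have [a_in l_sub] := (l_in a (mem_head a l), fun j jl => l_in j (mem_behead jl)).
by rewrite !big_cons permM permnatM IHl // tau_permnat; case: a_in.
Qed.

Variable ix : nat -> nat.
Hypothesis ix_le : forall n, 0 < n -> 0 < ix n <= n.

Local Notation sig n := (permnat n (sigma_of ix n)).

(* [sigma_(n+1)] is [sigma_n] with [n] inserted in its cycles just before [ix (n+1) - 1]. *)
Lemma sigma_ofS {n y} : y <= n ->
  sig n.+1 y = if y == n then (ix n.+1).-1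
               else if sig n y == (ix n.+1).-1 then n else sig n y.
Proof.
move=> yn; have ix0 := ix_le _ (ltn0Sn n).
rewrite -[y]/(val (Ordinal (yn : y < n.+1))) permnatE /sigma_of iota1S big_rcons /= permM.
rewrite tau_val ?leqnn //= prod_tau_permnat => [/= | j]; last first.
  rewrite mem_iota add1n ltnS => /andP[j0 jn]; have /andP[-> ixj] := ix_le _ j0.
  by rewrite j0 jn (leq_trans ixj jn).
have [lt_yn | ge_yn] := ltnP y n.
  by rewrite (ltn_eqF lt_yn) (ltn_eqF (permnat_lt _ lt_yn)).
have -> : y = n by apply/eqP; rewrite eqn_leq yn ge_yn.
by rewrite permnat_out // eqxx.
Qed.

Inductive detour (g : nat -> nat) (m : nat) : nat -> nat -> Prop :=
| DetourStep y : detour g m y (g y)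
| DetourSkip y z : m <= g y -> detour g m (g y) z -> detour g m y z.

Lemma detour_iter {g m y z} : detour g m y z ->
  exists t, [/\ 0 < t, iter t g y = z & forall t', 0 < t' -> t' < t -> m <= iter t' g y].
Proof.
elim=> {y z} [y | y z gy _ [t [t0 <- t_min]]].
  by exists 1; split=> // -[|[|t']].
exists t.+1; split=> //; first by rewrite iterSr.
by case=> [|[|t']] // _ lt_t; rewrite iterSr // t_min.
Qed.

Lemma detour_sigma_ofS m n y z : m <= n -> y < n ->
  detour (sig n) m y z -> detour (sig n.+1) m y z.
Proof.
move=> mn + d; elim: d => {y z} [y | y z my _ IHd] yn.
  have [sy | sy] := eqVneq (sig n y) (ix n.+1).-1.
  - apply: DetourSkip; first by rewrite (sigma_ofS (ltnW yn)) (ltn_eqF yn) sy eqxx.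
    rewrite (sigma_ofS (ltnW yn)) (ltn_eqF yn) sy eqxx.
    by have := DetourStep (sig n.+1) m n; rewrite (sigma_ofS (leqnn n)) eqxx.
  - by have := DetourStep (sig n.+1) m y; rewrite (sigma_ofS (ltnW yn)) (ltn_eqF yn) (negbTE sy).
have sy_lt := permnat_lt (sigma_of ix n) yn.
have [sy | sy] := eqVneq (sig n y) (ix n.+1).-1.
  apply: DetourSkip; first by rewrite (sigma_ofS (ltnW yn)) (ltn_eqF yn) sy eqxx.
  rewrite (sigma_ofS (ltnW yn)) (ltn_eqF yn) sy eqxx.
  apply: DetourSkip; first by rewrite (sigma_ofS (leqnn n)) eqxx -sy.
  by rewrite (sigma_ofS (leqnn n)) eqxx -sy; apply: IHd.
apply: DetourSkip; first by rewrite (sigma_ofS (ltnW yn)) (ltn_eqF yn) (negbTE sy).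
by rewrite (sigma_ofS (ltnW yn)) (ltn_eqF yn) (negbTE sy); apply: IHd.
Qed.

Lemma detour_sigma_of {m n y} : 0 < m -> m <= n -> y < m ->
  detour (sig n) m y (sig m y).
Proof.
move=> m0; elim: n => [|n IHn] mn ym; first by move: (leq_trans m0 mn).
have [-> | neq_mn] := eqVneq m n.+1; first exact: DetourStep.
have mn' : m <= n by rewrite -ltnS ltn_neqAle neq_mn mn.
by apply: detour_sigma_ofS => //; [exact: leq_trans ym mn' | exact: IHn].
Qed.

Lemma virtual_permutation_sigma_of : virtual_permutation (sigma_of ix).
Proof.
move=> n m m0 mn j.
have [t [t0 tj t_min]] := detour_iter (detour_sigma_of m0 mn (ltn_ord j)).
by exists t; split=> //; rewrite tj permnatE.
Qed.

End VirtualPermutation.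

Theorem proposition2p5 (R : realType) (x : forall n : nat, 'cV[R[i]]_n)
  (hx : forall n : nat, (1 <= n)%N -> unit_sphere n (x n)) :
  exists u : forall n : nat, 'M[R[i]]_n,
    [/\ virtual_isometry u,
        (forall n : nat, (1 <= n)%N -> u n *m evec n n = x n),
        (forall w : forall n : nat, 'M[R[i]]_n,
           virtual_isometry w ->
           (forall n : nat, (1 <= n)%N -> w n *m evec n n = x n) ->
           forall n : nat, (1 <= n)%N -> w n = u n),
        ((forall j : nat, (1 <= j)%N -> exists! r : 'M[R[i]]_j, refl_spec x j r) /\
        (forall r : forall j : nat, 'M[R[i]]_j,
           (forall j : nat, (1 <= j)%N -> refl_spec x j (r j)) ->
           forall n : nat, (1 <= n)%N -> u n = refl_prod r n))
      & (forall ix : nat -> nat,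
           (forall n : nat, (1 <= n)%N ->
              (1 <= ix n <= n)%N /\ x n = evec n (ix n)) ->
           virtual_permutation (sigma_of ix) /\
           forall n : nat, (1 <= n)%N -> u n = pmx n (sigma_of ix n))].
Proof.
have reflxP := refl_specP x hx.
exists (ux x); split.
- by split=> n _; [exact: ux_unitary | exact: ux_pi].
- exact: ux_evec.
- exact: ux_unique.
- split=> [j j0 | r r_spec n _].
    by exists (reflx x j); split=> [|r /(reflxP _ _ j0)]; first exact/reflxP.
  apply: eq_big_seq => j; rewrite mem_rev mem_iota => /andP[j0 _].
  by rewrite ((reflxP _ _ j0).1 (r_spec j j0)).
move=> ix ix_spec; split.
  by apply: virtual_permutation_sigma_of => n /ix_spec[].
move=> n _; rewrite /ux /refl_prod /sigma_of pmx_prod.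
apply: eq_big_seq => j; rewrite mem_rev mem_iota add1n ltnS => /andP[j0 jn].
have [ixj xj] := ix_spec j j0.
by rewrite /reflx xj refl_evec_tau // embed_pmx_tau.
Qed.
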